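(* Let $n$ be even and let $N$ be a $4$-net of order $n$ with parallel classes $\Pi_0,\dots,\Pi_3$ and a relation $\mathcal R$ of type $(\lambda_0,\dots,\lambda_3)$. Put $g_i=\frac n2-\lambda_i$. Then for every $\mathbf b=(b_0,\dots,b_3)\in\{0,1\}^4$ with an even number of ones, $$t_{\mathbf b}=\frac18 n^2+\frac14 n\sum_{i=0}^{3}(-1)^{b_i}g_i+\frac14\sum_{0\le i<j\le 3}(-1)^{b_i+b_j}g_ig_j .$$
   Context: A $k$-net of order $n$ is a set $P$ of $n^2$ points together with a set $L$ of $kn$ lines (subsets of $P$), each line containing $n$ points and each point lying on $k$ lines, such that $L$ partitions into $k$ parallel classes $\Pi_0,\dots,\Pi_{k-1}$ of $n$ pairwise disjoint lines each, and any two lines from different parallel classes meet in exactly one point. A relation on a net is a set $\mathcal R\subseteq L$ such that every point lies on an even number of lines of $\mathcal R$. Its type is $(\lambda_0,\dots,\lambda_{k-1})$ with $\lambda_i=|\mathcal R\cap\Pi_i|$. The type of a point $p$ is the binary string $\mathbf b\in\{0,1\}^k$ with $b_i=1$ iff the line of $\Pi_i$ through $p$ lies in $\mathcal R$; $t_{\mathbf b}$ is the number of points of type $\mathbf b$. *)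

From mathcomp Require Import all_boot all_order all_algebra.
Set Implicit Arguments. Unset Strict Implicit. Unset Printing Implicit Defensive.

Definition is_net (P L : finType) (k n : nat)
    (pts : L -> {set P}) (cls : L -> 'I_k) : Prop :=
  #|P| = (n ^ 2)%N /\
      injective pts /\
      (forall i : 'I_k, #|[set l | cls l == i]| = n) /\
      (forall l : L, #|pts l| = n) /\
      (forall p : P, #|[set l | p \in pts l]| = k) /\
      (forall l l' : L, cls l = cls l' -> l != l' ->
          [disjoint pts l & pts l']) /\
    (forall l l' : L, cls l != cls l' ->
          #|pts l :&: pts l'| = 1%N).

Definition is_relation (P L : finType) (pts : L -> {set P}) (R : {set L}) : Prop :=
  forall p : P, ~~ odd #|[set l in R | p \in pts l]|.

Definition rel_type (L : finType) (k : nat) (cls : L -> 'I_k) (R : {set L}) (i : 'I_k) : nat :=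
  #|[set l in R | cls l == i]|.

Definition point_type (P L : finType) (k : nat) (pts : L -> {set P}) (cls : L -> 'I_k)
    (R : {set L}) (p : P) (i : 'I_k) : bool :=
  [exists l, [&& l \in R, cls l == i & p \in pts l]].

Definition t_count (P L : finType) (k : nat) (pts : L -> {set P}) (cls : L -> 'I_k)
    (R : {set L}) (b : 'I_k -> bool) : nat :=
  #|[set p : P | [forall i, point_type pts cls R p i == b i]]|.

From mathcomp Require Import all_boot all_order all_algebra ring.
Import GRing.Theory Num.Theory.
Set Implicit Arguments. Unset Strict Implicit. Unset Printing Implicit Defensive.
Local Open Scope ring_scope.

(* Write s_i(p) = (-1)^(b_i(p)) for the signs of the type of a point p.  Since R
   is a relation, every point type has even weight, and on even-weight vectors
   the indicator of "x = b" expands in sign characters as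
     16 [x = b] = 2 + 2 sum_i s_i(b) s_i(x) + sum_(i<j) s_i(b) s_j(b) s_i(x) s_j(x).
   Summing over the points, double counting in the net gives
   sum_p s_i(p) = n (n - 2 lambda_i) = 2 n g_i and, as each line of R in class i
   meets each line of R in class j exactly once,
   sum_p s_i(p) s_j(p) = (n - 2 lambda_i) (n - 2 lambda_j) = 4 g_i g_j. *)

Lemma sum_mem_card (T : finType) (A : {pred T}) : (\sum_x (x \in A) = #|A|)%N.
Proof. by rewrite -sum1_card [RHS]big_mkcond; apply: eq_bigr => x _; case: (x \in A). Qed.

Lemma indicator_eq_even_weightE (F : comPzRingType) (x b : 'I_4 -> bool) :
  ~~ odd (\sum_i x i) -> ~~ odd (\sum_i b i) ->
  ((16 * [forall i, x i == b i])%N%:R : F) =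
    2 + 2 * \sum_i (-1) ^+ b i * (-1) ^+ x i
      + \sum_(i < 4) \sum_(j < 4 | (i < j)%N) (-1) ^+ (b i + b j) * ((-1) ^+ x i * (-1) ^+ x j).
Proof.
(* With chi_S = prod_(i in S) s_i, the 16 products chi_S(b) chi_S(x) sum to
   16 [x = b]; on even-weight vectors S and its complement give the same
   character, which folds the sum. *)
have -> : [forall i, x i == b i] = \big[andb/true]_i (x i == b i).
  by rewrite big_andE.
rewrite !big_ord_recl !big_ord0 /=.
rewrite !(big_mkcond (fun j : 'I_4 => (_ < j)%N)) !big_ord_recl !big_ord0 /=.
move: (x _) (x _) (x _) (x _) (b _) (b _) (b _) (b _).
by do 8!case; move=> //= _ _; ring.
Qed.

Section NetCounting.

Variables (P L : finType) (k n : nat) (pts : L -> {set P}) (cls : L -> 'I_k).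
Variable R : {set L}.
Hypothesis card_points : #|P| = (n ^ 2)%N.
Hypothesis card_line : forall l, #|pts l| = n.
Hypothesis parallel_disjoint :
  forall l l', cls l = cls l' -> l != l' -> [disjoint pts l & pts l'].
Hypothesis transversal_meet :
  forall l l', cls l != cls l' -> #|pts l :&: pts l'| = 1%N.

Local Notation type p i := (point_type pts cls R p i).
Local Notation lambda i := (rel_type cls R i).

Lemma point_typeE p i : (type p i : nat) = (\sum_(l in R | cls l == i) (p \in pts l))%N.
Proof.
have [/existsP[l0 /and3P[l0R l0i pl0]] | notype] := boolP (type p i); last first.
  rewrite big1 // => l /andP[lR li]; apply/eqP; rewrite eqb0.
  by apply: contra notype => pl; apply/existsP; exists l; rewrite lR li.
rewrite (bigD1 l0) /=; last by rewrite l0R.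
rewrite pl0 big1 // => l /andP[/andP[lR /eqP li] nl]; apply/eqP; rewrite eqb0.
apply/negP => pl; have /eqP := l0i; rewrite -li => /esym /parallel_disjoint /(_ nl).
by move/disjoint_setI0/setP/(_ p); rewrite !inE pl pl0.
Qed.

Lemma sum_point_type i : (\sum_p type p i = n * lambda i)%N.
Proof.
under eq_bigr do rewrite point_typeE.
rewrite exchange_big /=.
under eq_bigr do rewrite sum_mem_card card_line.
by rewrite sum_nat_const mulnC; congr (_ * _); apply: eq_card => l; rewrite inE.
Qed.

Lemma sum_point_type2 i j : i != j ->
  (\sum_p (type p i && type p j) = lambda i * lambda j)%N.
Proof.
move=> neq_ij.
under eq_bigr do rewrite -mulnb !point_typeE big_distrlr /=.
rewrite exchange_big /=.
under eq_bigr do rewrite exchange_big /=.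
rewrite /rel_type -!sum1dep_card big_distrlr /=.
apply: eq_bigr => l /andP[_ /eqP li]; apply: eq_bigr => l' /andP[_ /eqP l'j].
rewrite muln1 -(@transversal_meet l l') ?li ?l'j // -sum_mem_card.
by apply: eq_bigr => p _; rewrite inE mulnb.
Qed.

Lemma point_type_even : is_relation pts R -> forall p, ~~ odd (\sum_i type p i).
Proof.
move=> relR p; under eq_bigr do rewrite point_typeE.
rewrite -(partition_big cls xpredT) //= -big_mkcondr sum1dep_card.
exact: relR.
Qed.

Lemma sum_sign_point_type {F : comPzRingType} i :
  \sum_p ((-1) ^+ type p i : F) = n%:R * (n%:R - 2 * (lambda i)%:R).
Proof.
under eq_bigr do rewrite signrE -muln2 natrM.
rewrite sumrB sumr_const -mulr_suml -natr_sum sum_point_type card_points.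
by rewrite natrM natrX; ring.
Qed.

Lemma sum_sign_point_type2 {F : comPzRingType} i j : i != j ->
  \sum_p ((-1) ^+ type p i * (-1) ^+ type p j : F) =
    (n%:R - 2 * (lambda i)%:R) * (n%:R - 2 * (lambda j)%:R).
Proof.
move=> neq_ij.
have signM (a c : bool) : (-1) ^+ a * (-1) ^+ c =
    1 - 2 * (a : nat)%:R - 2 * (c : nat)%:R + 4 * (a && c : nat)%:R :> F.
  by case: a; case: c => /=; ring.
under eq_bigr do rewrite signM.
rewrite !big_split /= !sumrN sumr_const -!mulr_sumr -!natr_sum.
rewrite !sum_point_type sum_point_type2 // card_points.
by rewrite natrX !natrM; ring.
Qed.

End NetCounting.

Theorem mainTheorem3 (P L : finType) (n : nat) (pts : L -> {set P}) (cls : L -> 'I_4)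
    (R : {set L}) :
  ~~ odd n ->
  is_net n pts cls ->
  is_relation pts R ->
  let g := fun i : 'I_4 => (n%:R / 2 - (rel_type cls R i)%:R : rat) in
  forall b : 'I_4 -> bool,
    ~~ odd #|[set i | b i]| ->
    ((t_count pts cls R b)%:R : rat) =
      (n%:R ^+ 2) / 8
      + n%:R / 4 * (\sum_(i < 4) (-1) ^+ b i * g i)
      + 1 / 4 * (\sum_(i < 4) \sum_(j < 4 | (i < j)%N) (-1) ^+ (b i + b j)%N * g i * g j).
Proof.
move=> _ [card_points [_ [_ [card_line [_ [disj meet]]]]]] relR g b.
rewrite -sum_mem_card; under eq_bigr do rewrite inE; move=> even_b.
apply: (@mulfI _ 16) => //.
rewrite /t_count -sum_mem_card natr_sum mulr_sumr.
under eq_bigr => p _ do rewrite inE -natrM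
  (indicator_eq_even_weightE _ (point_type_even disj relR p) even_b).
rewrite !big_split /= sumr_const card_points -!mulr_sumr.
rewrite exchange_big [X in _ + X = _]exchange_big /=.
under [X in _ + X = _]eq_bigr do rewrite exchange_big.
rewrite !mulrDr; congr (_ + _ + _).
- by rewrite natrX; field.
- rewrite !mulrA !mulr_sumr; apply: eq_bigr => i _.
  by rewrite -mulr_sumr (sum_sign_point_type _ card_points card_line disj) /g; field.
- rewrite mulrA mulr_sumr; apply: eq_bigr => i _; rewrite mulr_sumr.
  apply: eq_bigr => j lt_ij; have neq_ij : i != j by rewrite -val_eqE ltn_eqF.
  rewrite -mulr_sumr (sum_sign_point_type2 _ card_points card_line disj meet neq_ij).
  by rewrite /g; field.
Qed.
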